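(* Let $G$ be a triangle-free graph with at least five vertices and minimum degree at least $3$. Define $G'$ with vertex set $V(G)\times\{0,1,2,3\}$ whose edges are: $(v,i)(v,j)$ for every $v\in V(G)$ and distinct $i,j\in\{0,1,2,3\}$; $(u,0)(v,0)$ for all distinct $u,v\in V(G)$; and $(u,i)(v,i)$ for $i\in\{1,2,3\}$ whenever $uv\in E(G)$; there are no other edges. Let $C=V(G)\times\{0\}$ (a clique of $G'$). Let $G''$ be obtained from $G'$ by adding, for each $w\in V(G')\setminus C$, a new vertex $w'$ adjacent only to $w$. Then $G'$ and $G''$ are diamond-free, and the following are equivalent: (1) $G$ is not $3$-colorable; (2) $C$ is a strong clique in $G'$; (3) $G'$ has a strong clique; (4) $C$ is a strong clique in $G''$; (5) every vertex of $G''$ is contained in a strong clique; (6) every clique in the collection $\{C\}\cup\{\{w,w'\}: w\in V(G')\setminus C\}$ is strong in $G''$; (7) $V(G'')$ can be partitioned into strong cliques.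
   Context: A clique is strong if it intersects every inclusion-maximal stable set. The diamond is $K_4$ minus one edge; diamond-free means no induced subgraph isomorphic to the diamond. A graph is $3$-colorable if its vertex set can be partitioned into three stable sets. *)

From mathcomp Require Import all_boot.
Set Implicit Arguments. Unset Strict Implicit. Unset Printing Implicit Defensive.

Section Graphs.
Variables (V : finType) (g : rel V).

Definition simple_graph : Prop := symmetric g /\ irreflexive g.

Definition triangle_free : Prop :=
  forall a b c : V, g a b -> g b c -> g a c -> False.

Definition min_degree_ge (k : nat) : Prop :=
  forall v : V, k <= #|[set u | g v u]|.

Definition is_clique (K : {set V}) : Prop :=
  forall x y, x \in K -> y \in K -> x != y -> g x y.

Definition is_stable (S : {set V}) : Prop :=
  forall x y, x \in S -> y \in S -> ~~ g x y.

Definition maximal_stable (S : {set V}) : Prop :=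
  is_stable S /\ forall S' : {set V}, is_stable S' -> S \subset S' -> S' = S.

Definition strong_clique (K : {set V}) : Prop :=
  is_clique K /\ forall S, maximal_stable S -> exists x, (x \in K) && (x \in S).

Definition diamond_free : Prop :=
  ~ exists a b c d : V,
      [/\ uniq [:: a; b; c; d],
          [&& g a b, g a c, g a d, g b c & g b d] & ~~ g c d].

Definition three_colorable : Prop :=
  exists f : V -> 'I_3, forall x y, g x y -> f x != f y.

Definition has_strong_clique : Prop := exists K : {set V}, strong_clique K.

Definition every_vertex_in_strong_clique : Prop :=
  forall v : V, exists K : {set V}, v \in K /\ strong_clique K.

Definition strong_clique_partition : Prop :=
  exists P : {set {set V}}, partition P [set: V] /\
     forall K : {set V}, K \in P -> strong_clique K.

End Graphs.

Section Construction.
Variables (T : finType) (e : rel T).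

Definition Gp : rel (T * 'I_4) := fun x y =>
  [|| (x.1 == y.1) && (x.2 != y.2),
      [&& x.1 != y.1, x.2 == ord0 & y.2 == ord0]
    | [&& x.2 == y.2, x.2 != ord0 & e x.1 y.1]].

Definition Cp : {set T * 'I_4} := [set x | x.2 == ord0].

Definition nonC := {w : T * 'I_4 | w.2 != ord0}.

(* G'': vertices of G' (inl) plus a pendant vertex w' (inr w) for each w not in C. *)
Definition Gpp : rel ((T * 'I_4) + nonC) := fun x y =>
  match x, y with
  | inl a, inl b => Gp a b
  | inl a, inr w => a == val w
  | inr w, inl a => a == val w
  | inr _, inr _ => false
  end.

Definition Cpp : {set (T * 'I_4) + nonC} := [set inl x | x in Cp].

Definition pendant_pair (w : nonC) : {set (T * 'I_4) + nonC} :=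
  [set inl (val w); inr w].

End Construction.

From mathcomp Require Import all_boot.
Set Implicit Arguments. Unset Strict Implicit. Unset Printing Implicit Defensive.

(* Strongness is handled through domination: a clique dominated by a stable
   set (every vertex of the clique has a neighbour in it) misses a maximal
   stable set and is not strong; conversely a maximal stable set dominates
   every vertex outside it.
   - If G is 3-colourable, every clique of G' is dominated by a stable set.
     Since G is triangle-free, a triangle of G' lies in one column {v} x 4 or
     in C, so a clique of G' lies in C, in a column, or is a single edge
     between two columns outside C; each case is dominated explicitly (by a
     colouring, by a transversal of neighbours, by two vertices).
   - If G is not 3-colourable, a maximal stable set avoiding C would dominate
     C, hence meet every column outside layer 0, and its layers would
     3-colour G; so C is strong, in G' and in G''.
   - The pendant pairs {w, w'} of G'' are always strong, and the fibres of
     the map sending C to one class and {w, w'} to another partition G''.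
   Diamond-freeness follows from the same description of triangles. *)

Section StrongCliques.
Variables (V : finType) (g : rel V).

(* Boolean stability, so that [maxset] can produce maximal stable sets. *)
Definition stableb (S : {set V}) : bool := [forall x in S, forall y in S, ~~ g x y].

Lemma stablebP S : reflect (is_stable g S) (stableb S).
Proof.
apply: (iffP forall_inP) => [H x y xS yS | H x xS].
  by move/forall_inP: (H x xS); apply.
by apply/forall_inP => y yS; apply: H.
Qed.

Lemma maximal_stable_superset S0 :
  is_stable g S0 -> exists2 S, maximal_stable g S & S0 \subset S.
Proof.
move/stablebP => stS0; have [S /maxsetP [/stablebP stS maxS] subS] := maxset_exists stS0.
by exists S => //; split=> // S' /stablebP stS' subS'; apply: maxS.
Qed.

Definition dominates (S K : {set V}) : Prop :=
  forall x, x \in K -> exists2 y, y \in S & g x y.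

Lemma dominates_sub (S K K' : {set V}) :
  K' \subset K -> dominates S K -> dominates S K'.
Proof. by move=> /subsetP subK domK x /subK; apply: domK. Qed.

(* A clique dominated by a stable set misses a maximal stable set containing
   it, hence is not strong: this is how strongness is refuted. *)
Lemma dominated_not_strong (S0 K : {set V}) :
  is_stable g S0 -> dominates S0 K -> ~ strong_clique g K.
Proof.
move=> stS0 domK [_ strongK]; have [S maxS subS] := maximal_stable_superset stS0.
have [x /andP [xK xS]] := strongK S maxS; have [y yS0 gxy] := domK x xK.
by case: maxS => stS _; move: (stS x y xS (subsetP subS y yS0)); rewrite gxy.
Qed.

Lemma strong_cliqueI (K : {set V}) : is_clique g K ->
  (forall S, maximal_stable g S -> (forall x, x \in K -> x \notin S) -> False) ->
  strong_clique g K.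
Proof.
move=> cliqueK noAvoid; split=> // S maxS.
have [/exists_inP [x xK xS] | /exists_inPn avoid] := boolP [exists x in K, x \in S].
  by exists x; rewrite xK.
by case: (noAvoid S maxS avoid).
Qed.

Lemma partition_every_vertex_strong (P : {set {set V}}) :
  partition P [set: V] -> (forall K, K \in P -> strong_clique g K) ->
  every_vertex_in_strong_clique g.
Proof.
move=> partP strongP x; have : x \in cover P by rewrite (cover_partition partP) inE.
by case/bigcupP => K KP xK; exists K; split=> //; apply: strongP.
Qed.

Hypotheses (gsym : symmetric g) (girr : irreflexive g).

Lemma maximal_stable_dominates S x :
  maximal_stable g S -> x \notin S -> exists2 y, y \in S & g x y.
Proof.
move=> [stS maxS] xS.
have [/exists_inP [y yS gxy] | /exists_inPn noNbr] := boolP [exists y in S, g x y].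
  by exists y.
have stxS : is_stable g (x |: S).
  move=> a b; rewrite !inE => /predU1P [-> | aS] /predU1P [-> | bS].
  - by rewrite girr.
  - exact: noNbr.
  - by rewrite gsym; apply: noNbr.
  - exact: stS.
by move: xS; rewrite -(maxS _ stxS (subsetUr _ _)) setU11.
Qed.

(* An edge [xy] whose endpoint [y] has no other neighbour is a strong clique:
   a maximal stable set avoiding [y] must contain its only neighbour [x]. *)
Lemma pendant_edge_strong x y :
  g x y -> (forall z, g y z -> z = x) -> strong_clique g [set x; y].
Proof.
move=> gxy pendant; apply: strong_cliqueI.
  move=> a b; rewrite !inE => /pred2P [] -> /pred2P [] -> //; rewrite ?eqxx //.
  by rewrite gsym.
move=> S maxS avoid.
have [z zS /pendant xz] := maximal_stable_dominates maxS (avoid y (set22 _ _)).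
by move: (avoid x (set21 _ _)); rewrite -xz zS.
Qed.

End StrongCliques.

Lemma fresh_vertex (V : finType) (s : seq V) :
  size s < #|V| -> exists x, x \notin s.
Proof.
move=> lt_s_V; apply/existsP; rewrite -negb_forall; apply: contraTN lt_s_V.
move=> /forallP in_s; rewrite -leqNgt (leq_trans _ (card_size s)) //.
by apply: subset_leq_card; apply/subsetP => x _; apply: in_s.
Qed.

Lemma free_layer (i : 'I_4) : exists2 j : 'I_4, j != ord0 & j != i.
Proof.
pose l1 : 'I_4 := Ordinal (isT : 1 < 4); pose l2 : 'I_4 := Ordinal (isT : 2 < 4).
by case: i => [[|[|[|[|m]]]] lt_i4] //; [exists l1 | exists l2 | exists l1 | exists l1].
Qed.

Section GPrime.
Variables (T : finType) (e : rel T).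
Hypotheses (e_sym : symmetric e) (e_irr : irreflexive e).

Lemma Gp_irr : irreflexive (Gp e).
Proof. by move=> x; rewrite /Gp !eqxx e_irr /= !andbF. Qed.

Lemma Gp_sym : symmetric (Gp e).
Proof.
move=> x y; rewrite /Gp; congr [|| _, _ | _].
- by rewrite eq_sym [y.2 == _]eq_sym.
- by rewrite [y.1 == _]eq_sym; do 2!case: (_ == ord0); rewrite ?andbT ?andbF.
- by rewrite e_sym eq_sym; case: eqP => [-> | _].
Qed.

(* An edge of G' joins two vertices of one column or two of one layer. *)
Lemma Gp_column_or_layer x y : Gp e x y -> (x.1 == y.1) = (x.2 != y.2).
Proof.
rewrite /Gp; case: (x.1 =P y.1) => [-> | _] /=; first by rewrite e_irr !andbF orbF.
by case/orP => [/andP [/eqP -> /eqP ->] | /andP [/eqP -> _]]; rewrite eqxx.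
Qed.

Lemma Gp_same_layer x y : Gp e x y -> x.1 != y.1 -> x.2 = y.2.
Proof. by move=> /Gp_column_or_layer + /negbTE ne1; rewrite ne1 => /esym/negbFE/eqP. Qed.

Lemma Gp_layer_edge x y : Gp e x y -> x.1 != y.1 -> x.2 != ord0 -> e x.1 y.1.
Proof.
by rewrite /Gp => + /negbTE ne1 /negbTE ne0; rewrite ne1 ne0 /= => /andP [].
Qed.

Lemma Gp_columnI x y : x.1 = y.1 -> x != y -> Gp e x y.
Proof.
case: x y => [u i] [v j] /= <- neq; rewrite /Gp /= eqxx /=.
by rewrite e_irr !andbF orbF; apply: contra neq => /eqP ->.
Qed.

Lemma Gp_layerI x y :
  x.1 != y.1 -> x.2 = y.2 -> (x.2 == ord0) || e x.1 y.1 -> Gp e x y.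
Proof.
move=> /negbTE ne1 eq2; rewrite /Gp ne1 -eq2 eqxx /=.
by case: (x.2 == ord0).
Qed.

Lemma Cp_clique : is_clique (Gp e) (Cp T).
Proof.
move=> [u i] [v j]; rewrite !inE /= => /eqP -> /eqP -> neq.
apply: Gp_layerI => /=; rewrite ?eqxx //.
by apply: contra neq => /eqP ->.
Qed.

Lemma transversal_stable (S : {set T * 'I_4}) :
  (forall x y, x \in S -> y \in S -> x != y -> (x.1 != y.1) && (x.2 != y.2)) ->
  is_stable (Gp e) S.
Proof.
move=> transS x y xS yS; have [<- | neq] := eqVneq x y; first by rewrite Gp_irr.
case/andP: (transS x y xS yS neq) => ne1 ne2.
by apply/negP => /Gp_column_or_layer; rewrite (negbTE ne1) ne2.
Qed.

Hypothesis tf : triangle_free e.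

Lemma Gp_column_closed x y z :
  Gp e x y -> Gp e y z -> Gp e x z -> x.1 = y.1 -> y.1 = z.1.
Proof.
move=> xy yz xz exy; have [// | nyz] := eqVneq y.1 z.1.
have nxz : x.1 != z.1 by rewrite exy.
have := Gp_column_or_layer xy.
by rewrite exy eqxx (Gp_same_layer yz nyz) (Gp_same_layer xz nxz) eqxx.
Qed.

Lemma Gp_triangle x y z : Gp e x y -> Gp e y z -> Gp e x z ->
  (x.1 = y.1 /\ y.1 = z.1) \/ [/\ x.2 = ord0, y.2 = ord0 & z.2 = ord0].
Proof.
move=> xy yz xz; have [exy | nxy] := eqVneq x.1 y.1.
  by left; split=> //; apply: Gp_column_closed exy.
have nyz : y.1 != z.1.
  apply: contra nxy => /eqP eyz; apply/eqP.
  by rewrite eyz (@Gp_column_closed y z x yz _ _ eyz) // Gp_sym.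
have nxz : x.1 != z.1.
  apply: contra nxy => /eqP exz; apply/eqP.
  by rewrite exz (@Gp_column_closed x z y xz _ xy exz) // Gp_sym.
have [exy2 eyz2] := (Gp_same_layer xy nxy, Gp_same_layer yz nyz).
have [x0 | xn0] := eqVneq x.2 ord0; first by right; rewrite -eyz2 -exy2.
have yn0 : y.2 != ord0 by rewrite -exy2.
case: (tf (Gp_layer_edge xy nxy xn0) (Gp_layer_edge yz nyz yn0)).
exact: Gp_layer_edge xz nxz xn0.
Qed.

(* Two triangles sharing an edge lie both in one column or both in C
   (otherwise the shared edge would be a loop), so G' is diamond-free. *)
Lemma Gp_diamond_free : diamond_free (Gp e).
Proof.
case=> a [b [c [d [uniq_abcd /and5P [ab ac ad bc bd] ncd]]]].
move: uniq_abcd; rewrite /= !inE !negb_or => /and4P [/and3P [nab _ _] _ ncd' _].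
move/negP: ncd; apply.
have [[e1 e2] | [a0 b0 c0]] := Gp_triangle ab bc ac;
  have [[f1 f2] | [a0' b0' d0]] := Gp_triangle ab bd ad.
- by apply: Gp_columnI; rewrite // -e2 -f2.
- by move: nab; rewrite (injective_projections _ _ e1) ?a0' ?b0' ?eqxx.
- by move: nab; rewrite (injective_projections _ _ f1) ?a0 ?b0 ?eqxx.
- by apply: Cp_clique; rewrite // inE ?c0 ?d0.
Qed.

(* The layer-edge domination: an edge of G' between two columns outside C is
   dominated by one vertex of C and one vertex of a third layer. *)
Lemma layer_edge_dominated a b : a.1 != b.1 -> a.2 = b.2 -> a.2 != ord0 ->
  exists2 S, is_stable (Gp e) S & dominates (Gp e) S [set a; b].
Proof.
move=> ne1 eq2 a_n0; have [j j_n0 j_na] := free_layer a.2.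
exists [set (a.1, ord0); (b.1, j)].
  apply: transversal_stable => x y; rewrite !inE.
  by case/orP => /eqP -> /orP [] /eqP -> //=; rewrite ?eqxx // => _;
    rewrite ?ne1 ?j_n0 // eq_sym ?ne1 ?j_n0.
move=> x; rewrite !inE => /orP [] /eqP ->.
  exists (a.1, ord0); first exact: set21.
  by apply: Gp_columnI => //; apply: contra a_n0 => /eqP {1}->.
exists (b.1, j); first exact: set22.
by apply: Gp_columnI => //; apply: contra j_na; rewrite eq2 => /eqP ->.
Qed.

(* A column of G' is dominated by a stable transversal: layer [k > 0] uses
   the column of a neighbour [w_k] of [u], layer 0 a fifth vertex [x0]. *)
Lemma column_dominated (u : T) : 5 <= #|T| -> min_degree_ge e 3 ->
  exists2 S, is_stable (Gp e) S & dominates (Gp e) S [set x | x.1 == u].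
Proof.
move=> card_T deg_e; pose ws := take 3 (enum [set v | e u v]).
have size_ws : size ws = 3 by rewrite size_takel // -cardE; apply: deg_e.
have ws_nbr v : v \in ws -> e u v by move/mem_take; rewrite mem_enum inE.
have [x0 x0_fresh] : exists x0, x0 \notin u :: ws.
  by apply: fresh_vertex; rewrite /= size_ws.
pose c := x0 :: ws.
have uniq_c : uniq c.
  by rewrite /= (contra (mem_behead (x := x0)) x0_fresh) take_uniq ?enum_uniq.
exists [set (nth x0 c k, k) | k : 'I_4].
  apply: transversal_stable => _ _ /imsetP [k _ ->] /imsetP [l _ ->] ne /=.
  have kl : k != l by apply: contra ne => /eqP ->.
  by rewrite nth_uniq //= ?size_ws // kl.
move=> [v k]; rewrite inE /= => /eqP ->.
exists (nth x0 c k, k); first exact: imset_f.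
case: k => [[|k'] lt_k].
  by apply: Gp_layerI => //=; rewrite (memPn x0_fresh) ?mem_head.
have w_in : nth x0 ws k' \in ws by rewrite mem_nth // size_ws.
apply: Gp_layerI => //=; last exact: ws_nbr.
by apply: contraTneq (ws_nbr _ w_in) => <-; rewrite e_irr.
Qed.

(* A 3-colouring [f] of G gives the stable set {(v, f v + 1)}, which
   dominates C. *)
Lemma coloring_dominates_C : three_colorable e ->
  exists2 S, is_stable (Gp e) S & dominates (Gp e) S (Cp T).
Proof.
case=> f f_proper; exists [set x | x.2 == lift ord0 (f x.1)].
  move=> x y; rewrite !inE => /eqP x2 /eqP y2; apply/negP => xy.
  have [e1 | ne1] := eqVneq x.1 y.1.
    by move: (Gp_column_or_layer xy); rewrite e1 eqxx x2 y2 e1 eqxx.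
  have /f_proper : e x.1 y.1 by apply: Gp_layer_edge; rewrite // x2 eq_sym neq_lift.
  by rewrite -(inj_eq (@lift_inj _ ord0)) -x2 -y2 (Gp_same_layer xy ne1) eqxx.
move=> x; rewrite inE => /eqP x2.
exists (x.1, lift ord0 (f x.1)); first by rewrite inE.
apply: Gp_columnI => //; apply: contra_neq (neq_lift ord0 (f x.1)).
by move=> /(congr1 snd) /= <-; rewrite x2.
Qed.

Lemma Gp_clique_shape (K : {set T * 'I_4}) : is_clique (Gp e) K ->
  [\/ K \subset Cp T, exists u, K \subset [set x | x.1 == u]
    | exists a b, [/\ a.1 != b.1, a.2 = b.2, a.2 != ord0 & K \subset [set a; b]]].
Proof.
move=> cliqueK.
have [/subsetP // | /subsetPn [a aK]] := boolP (K \subset Cp T); first by constructor 1.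
rewrite inE => a_n0.
have [K_col | /subsetPn [b bK]] := boolP (K \subset [set x | x.1 == a.1]).
  by constructor 2; exists a.1.
rewrite inE eq_sym => nab.
have ab : Gp e a b by apply: cliqueK; rewrite // (contraNneq _ nab) // => ->.
constructor 3; exists a, b; split=> //; first exact: Gp_same_layer.
apply/subsetP => x xK; rewrite !inE; apply/norP => [[xa xb]].
have [[_ ab1] | [_ a0 _]] :=
  Gp_triangle (cliqueK _ _ xK aK xa) ab (cliqueK _ _ xK bK xb).
  by move: nab; rewrite ab1 eqxx.
by move: a_n0; rewrite a0 eqxx.
Qed.

Lemma colorable_clique_dominated (K : {set T * 'I_4}) :
  5 <= #|T| -> min_degree_ge e 3 -> three_colorable e -> is_clique (Gp e) K ->
  exists2 S, is_stable (Gp e) S & dominates (Gp e) S K.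
Proof.
move=> card_T deg_e col_e.
case/Gp_clique_shape => [subK | [u subK] | [a [b [ne1 eq2 a_n0 subK]]]];
  [ have [S stS domS] := coloring_dominates_C col_e
  | have [S stS domS] := column_dominated u card_T deg_e
  | have [S stS domS] := layer_edge_dominated ne1 eq2 a_n0 ];
  by exists S => //; apply: dominates_sub domS.
Qed.

(* Conversely, a stable set of G' avoiding C and dominating C meets every
   column outside C; reading off its layers gives a 3-colouring of G. *)
Lemma coloring_of_dominated_C (S : {set T * 'I_4}) :
  is_stable (Gp e) S -> (forall x, x \in Cp T -> x \notin S) ->
  dominates (Gp e) S (Cp T) -> three_colorable e.
Proof.
move=> stS avoidC domC.
have in_column v : exists j : 'I_3, (v, lift ord0 j) \in S.
  have vC : (v, ord0) \in Cp T by rewrite inE.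
  have [[w i] yS vy] := domC _ vC.
  have i_n0 : i != ord0 by apply: contraL yS => i0; apply: avoidC; rewrite inE.
  have vw : v = w by apply/eqP; rewrite (Gp_column_or_layer vy) eq_sym.
  subst w.
  by case: (unliftP ord0 i) yS => [j -> | i0]; [exists j | rewrite i0 eqxx in i_n0].
pose f v := odflt ord0 [pick j | (v, lift ord0 j) \in S].
have f_in v : (v, lift ord0 (f v)) \in S.
  by rewrite /f; case: pickP => [// | none]; have [j] := in_column v; rewrite none.
exists f => u v euv; apply/eqP => fuv.
have /negP := stS _ _ (f_in u) (f_in v); apply; rewrite fuv.
apply: Gp_layerI; rewrite //= ?euv ?orbT //.
by apply: contraTneq euv => ->; rewrite e_irr.
Qed.

Lemma Cp_strong : ~ three_colorable e -> strong_clique (Gp e) (Cp T).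
Proof.
move=> not_col; apply: strong_cliqueI => [| S maxS avoidC]; first exact: Cp_clique.
apply/not_col/(coloring_of_dominated_C maxS.1 avoidC) => x xC.
exact: maximal_stable_dominates Gp_sym Gp_irr _ _ maxS (avoidC x xC).
Qed.

Lemma colorable_no_strong_clique (K : {set T * 'I_4}) :
  5 <= #|T| -> min_degree_ge e 3 -> three_colorable e -> ~ strong_clique (Gp e) K.
Proof.
move=> card_T deg_e col_e strongK.
have [S stS domK] := colorable_clique_dominated card_T deg_e col_e strongK.1.
exact: dominated_not_strong stS domK strongK.
Qed.

End GPrime.

Section GDoublePrime.
Variables (T : finType) (e : rel T).
Hypotheses (e_sym : symmetric e) (e_irr : irreflexive e).

Lemma Gpp_irr : irreflexive (Gpp e).
Proof. by case=> [a | w] //=; apply: Gp_irr. Qed.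

Lemma Gpp_sym : symmetric (Gpp e).
Proof. by case=> [a | w] [b | w'] //=; apply: Gp_sym. Qed.

Lemma Gpp_pendant (w : nonC T) x : Gpp e (inr w) x -> x = inl (val w).
Proof. by case: x => //= a /eqP ->. Qed.

Lemma Gpp_two_neighbours x y z :
  Gpp e x y -> Gpp e x z -> y != z -> exists a, x = inl a.
Proof.
case: x => [a | w]; first by exists a.
by move=> /Gpp_pendant -> /Gpp_pendant ->; rewrite eqxx.
Qed.

Hypothesis tf : triangle_free e.

(* Every vertex of a diamond has two neighbours in it, so a diamond of G''
   lies in G'. *)
Lemma Gpp_diamond_free : diamond_free (Gpp e).
Proof.
move=> [a [b [c [d [uniq_abcd edges ncd]]]]].
have /and5P [ab ac ad bc bd] := edges.
move: (uniq_abcd); rewrite /= !inE !negb_or.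
move=> /and4P [/and3P [nab nac _] /andP [nbc _] _ _].
have [a' ea] := Gpp_two_neighbours ab ac nbc.
have [b' eb] := Gpp_two_neighbours (etrans (Gpp_sym b a) ab) bc nac.
have [c' ec] :=
  Gpp_two_neighbours (etrans (Gpp_sym c a) ac) (etrans (Gpp_sym c b) bc) nab.
have [d' ed] :=
  Gpp_two_neighbours (etrans (Gpp_sym d a) ad) (etrans (Gpp_sym d b) bd) nab.
subst a b c d; apply: (Gp_diamond_free e_sym e_irr tf).
by exists a', b', c', d'.
Qed.

Lemma mem_Cpp_inl a : (inl a \in Cpp T) = (a \in Cp T).
Proof. by rewrite mem_imset //; apply: inl_inj. Qed.

Lemma mem_Cpp_inr (w : nonC T) : (inr w \in Cpp T) = false.
Proof. by apply/imsetP => [[]]. Qed.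

Lemma Cpp_clique : is_clique (Gpp e) (Cpp T).
Proof.
move=> [a | w] [b | w']; rewrite ?mem_Cpp_inr // !mem_Cpp_inl => aC bC neq /=.
by apply: Cp_clique => //; apply: contra neq => /eqP ->.
Qed.

Lemma Gpp_C_neighbour a y :
  a \in Cp T -> Gpp e (inl a) y -> exists2 b, y = inl b & Gp e a b.
Proof.
case: y => [b | w] aC /=; first by exists b.
by move/eqP => a_w; move: aC (svalP w); rewrite a_w inE => ->.
Qed.

Lemma stable_inl (S : {set T * 'I_4}) :
  is_stable (Gp e) S -> is_stable (Gpp e) (inl @: S).
Proof. by move=> stS _ _ /imsetP [a aS ->] /imsetP [b bS ->]; apply: stS. Qed.

(* If G is not 3-colourable, C is a strong clique of G'': a maximal stable
   set of G'' avoiding C restricts to a stable set of G' dominating C. *)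
Lemma Cpp_strong : ~ three_colorable e -> strong_clique (Gpp e) (Cpp T).
Proof.
move=> not_col; apply: strong_cliqueI => [| S maxS avoidC]; first exact: Cpp_clique.
apply: not_col (@coloring_of_dominated_C _ _ e_irr [set a | inl a \in S] _ _ _).
- by move=> a b; rewrite !inE; apply: maxS.1.
- by move=> a aC; rewrite inE avoidC ?mem_Cpp_inl.
move=> a aC; have aS : inl a \notin S by rewrite avoidC ?mem_Cpp_inl.
have [y yS ay] := maximal_stable_dominates Gpp_sym Gpp_irr maxS aS.
by have [b yb ab] := Gpp_C_neighbour aC ay; exists b; rewrite // inE -yb.
Qed.

Lemma pendant_pair_strong (w : nonC T) : strong_clique (Gpp e) (pendant_pair w).
Proof. by apply: (pendant_edge_strong Gpp_sym Gpp_irr _ (@Gpp_pendant w)) => /=. Qed.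

(* If G is 3-colourable, no clique of G'' through a vertex of C is strong:
   such a clique lies in G', where it is dominated by a stable set. *)
Lemma colorable_no_strong_clique_at_C a (K : {set (T * 'I_4) + nonC T}) :
  5 <= #|T| -> min_degree_ge e 3 -> three_colorable e ->
  a \in Cp T -> inl a \in K -> ~ strong_clique (Gpp e) K.
Proof.
move=> card_T deg_e col_e aC aK strongK; have cliqueK := strongK.1.
pose K' := [set b | inl b \in K].
have K_inl x : x \in K -> exists2 b, x = inl b & b \in K'.
  move=> xK; have [-> | xa] := eqVneq x (inl a); first by exists a; rewrite ?inE.
  have ax : inl a != x by rewrite eq_sym.
  have [b xb _] := Gpp_C_neighbour aC (cliqueK _ _ aK xK ax).
  by exists b; rewrite // inE -xb.
have cliqueK' : is_clique (Gp e) K'.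
  move=> b c; rewrite !inE => bK cK bc.
  by apply: (cliqueK (inl b) (inl c)); rewrite // (inj_eq (@inl_inj _ _)).
have [S stS domK'] :=
  colorable_clique_dominated e_sym e_irr tf card_T deg_e col_e cliqueK'.
apply: dominated_not_strong (stable_inl stS) _ strongK => x /K_inl [b -> bK'].
by have [y yS b_y] := domK' b bK'; exists (inl y); rewrite ?imset_f.
Qed.

(* Given that C is strong, every vertex of G'' lies in C or in its pendant pair. *)
Lemma Cpp_strong_every_vertex :
  strong_clique (Gpp e) (Cpp T) -> every_vertex_in_strong_clique (Gpp e).
Proof.
move=> strongC [a | w].
  have [a0 | a_n0] := eqVneq a.2 ord0.
    by exists (Cpp T); rewrite mem_Cpp_inl inE a0.
  exists (pendant_pair (exist _ a a_n0)); split; last exact: pendant_pair_strong.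
  by rewrite !inE eqxx.
by exists (pendant_pair w); split; [rewrite !inE eqxx orbT | apply: pendant_pair_strong].
Qed.

(* The class of a vertex of G'': [None] on C, [Some w] on {w, w'}. *)
Definition pendant_class (x : (T * 'I_4) + nonC T) : option (nonC T) :=
  match x with inl a => insub a | inr w => Some w end.

Lemma pendant_class_Some (w : nonC T) :
  [set x | Some w == pendant_class x] = pendant_pair w.
Proof.
apply/setP => [[a | w']]; rewrite !inE /= ?orbF.
  case: insubP => [w' _ <- | a_C]; first by apply/eqP/eqP => [[<-] | [/val_inj ->]].
  by apply/esym/eqP => [[a_w]]; rewrite a_w (svalP w) in a_C.
by rewrite /= eq_sym.
Qed.

Lemma pendant_class_None : [set x | None == pendant_class x] = Cpp T.
Proof.
apply/setP => [[a | w]]; rewrite ?mem_Cpp_inl ?mem_Cpp_inr inE //=.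
by case: insubP => [w _ <- | /negbNE a_C]; rewrite inE ?(negbTE (svalP w)).
Qed.

Lemma pendant_partition_strong :
  strong_clique (Gpp e) (Cpp T) ->
  (forall w, strong_clique (Gpp e) (pendant_pair w)) ->
  strong_clique_partition (Gpp e).
Proof.
move=> strongC strongP; exists (preim_partition pendant_class [set: _]).
split=> [| K /imsetP [x _ ->]]; first exact: preim_partitionP.
have -> : [set y in [set: _] | pendant_class x == pendant_class y] =
          [set y | pendant_class x == pendant_class y].
  by apply/setP => y; rewrite !inE.
by case: (pendant_class x) => [w |]; rewrite ?pendant_class_Some ?pendant_class_None.
Qed.

End GDoublePrime.

Unset Implicit Arguments.

Theorem mainTheorem7 (T : finType) (e : rel T) :
  simple_graph e -> triangle_free e -> 5 <= #|T| -> min_degree_ge e 3 ->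
  [/\ diamond_free (Gp e), diamond_free (Gpp e) &
      [<-> ~ three_colorable e;
           strong_clique (Gp e) (Cp T);
           has_strong_clique (Gp e);
           strong_clique (Gpp e) (Cpp T);
           every_vertex_in_strong_clique (Gpp e);
           strong_clique (Gpp e) (Cpp T) /\
             (forall w : nonC T, strong_clique (Gpp e) (pendant_pair w));
           strong_clique_partition (Gpp e)]].
Proof.
move=> [e_sym e_irr] tf card_T deg_e.
split; [exact: Gp_diamond_free | exact: Gpp_diamond_free |].
have /card_gt0P [v0 _] : 0 < #|T| by apply: leq_trans card_T.
have every_not_col : every_vertex_in_strong_clique (Gpp e) -> ~ three_colorable e.
  move=> every col_e; have [K [v0K strongK]] := every (inl (v0, ord0)).
  have v0C : (v0, ord0) \in Cp T by rewrite inE.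
  exact: (colorable_no_strong_clique_at_C e_sym e_irr tf card_T deg_e col_e
            v0C v0K strongK).
have some_strong_Cpp : has_strong_clique (Gp e) -> strong_clique (Gpp e) (Cpp T).
  case=> K strongK; apply: (Cpp_strong e_sym e_irr) => col_e.
  exact: (colorable_no_strong_clique e_sym e_irr tf card_T deg_e col_e strongK).
have every_strong_cliques : every_vertex_in_strong_clique (Gpp e) ->
    strong_clique (Gpp e) (Cpp T) /\ forall w, strong_clique (Gpp e) (pendant_pair w).
  move=> every; split; last exact: pendant_pair_strong.
  exact: Cpp_strong e_sym e_irr (every_not_col every).
apply: AllIffConj (Cp_strong e_sym e_irr) _.
apply: AllIffConj (fun strongC => ex_intro _ (Cp T) strongC) _.
apply: AllIffConj some_strong_Cpp _.
apply: AllIffConj (Cpp_strong_every_vertex e_sym e_irr) _.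
apply: AllIffConj every_strong_cliques _.
apply: AllIffConj; first by case; apply: pendant_partition_strong.
case=> P [partP strongP]; apply: every_not_col.
exact: partition_every_vertex_strong partP strongP.
Qed.
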